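(* Let $n$ be an even integer, $w\le n$, $i,t\le n/2$ and $s\le t$ nonnegative integers. Let ${\mathbf{a}},{\mathbf{b}},{\mathbf{c}},{\mathbf{d}}\in\mathbb{F}_3^{n/2}$ with $a_id_i-b_ic_i=1$ and $a_ic_i\neq0$ for all $i$. Let $\widetilde{{\mathbf{e}}}=({\mathbf{e}}_1,{\mathbf{e}}_2)$ be uniformly distributed over the vectors of $\mathbb{F}_3^n$ of Hamming weight $w$ (with ${\mathbf{e}}_1,{\mathbf{e}}_2\in\mathbb{F}_3^{n/2}$), and $\widetilde{{\mathbf{e}}}_V=-{\mathbf{c}}\odot{\mathbf{e}}_1+{\mathbf{a}}\odot{\mathbf{e}}_2$. Let $\widetilde q_1(i)=\mathbb{P}(|\widetilde{{\mathbf{e}}}_V|=i)$ and $\widetilde q_2(s,t)=\mathbb{P}(m_1(\widetilde{{\mathbf{e}}})=s\mid|\widetilde{{\mathbf{e}}}_V|=t)$. Then $$\widetilde q_1(i)=\frac{\binom{n/2}{i}}{\binom{n}{w}2^{w/2}}\sum_{\substack{p=0\\ w+p\equiv0\bmod 2}}^{i}\binom{i}{p}\binom{n/2-i}{(w+p)/2-i}2^{3p/2},$$ and $$\widetilde q_2(s,t)=\begin{cases}\dfrac{\binom{t}{s}\binom{n/2-t}{\frac{w+s}{2}-t}2^{3s/2}}{\sum_{p\equiv w \bmod 2}\binom{t}{p}\binom{n/2-t}{\frac{w+p}{2}-t}2^{3p/2}} & \text{if } w+s\equiv 0\bmod 2,\\ 0&\text{otherwise.}\end{cases}$$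
   Context: $|{\mathbf{x}}|$ is the Hamming weight; $\odot$ the componentwise product; for ${\mathbf{x}}\in\mathbb{F}_3^n$, $m_1({\mathbf{x}})=|\{1\le i\le n/2: |(x_i,x_{i+n/2})|=1\}|$. Binomial coefficients $\binom{m}{j}$ with $j<0$ or $j>m$ are $0$; $p$ ranges over nonnegative integers with $p\le t$. *)

From HB Require Import structures.
From mathcomp Require Import all_boot all_order all_algebra.
Set Implicit Arguments. Unset Strict Implicit. Unset Printing Implicit Defensive.
Import Order.TTheory GRing.Theory Num.Theory.
Local Open Scope ring_scope.

(* Vectors of F_3^m are row vectors 'rV['F_3]_m; F_3^n with n = h + h is split
   as e = (e1, e2) with e1 = lsubmx e, e2 = rsubmx e. *)

Definition hwt (m : nat) (x : 'rV['F_3]_m) : nat := #|[set j : 'I_m | x 0 j != 0]|.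

Definition cwmul (m : nat) (x y : 'rV['F_3]_m) : 'rV['F_3]_m := \row_j (x 0 j * y 0 j).

Definition m1 (h : nat) (x : 'rV['F_3]_(h + h)) : nat :=
  #|[set j : 'I_h | (((x ord0 (lshift h j) != 0%R) + (x ord0 (rshift h j) != 0%R))%N == 1%N)]|.

Definition eV (h : nat) (a c : 'rV['F_3]_h) (e : 'rV['F_3]_(h + h)) : 'rV['F_3]_h :=
  - cwmul c (lsubmx e) + cwmul a (rsubmx e).

Definition wsupport (h w : nat) : {set 'rV['F_3]_(h + h)} :=
  [set e | hwt e == w].

Definition uprob (R : fieldType) (h w : nat) (A : pred 'rV['F_3]_(h + h)) : R :=
  #|[set e in wsupport h w | A e]|%:R / #|wsupport h w|%:R.

Definition ucprob (R : fieldType) (h w : nat) (A B : pred 'rV['F_3]_(h + h)) : R :=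
  @uprob R h w (fun e => A e && B e) / @uprob R h w B.

Definition binz (m : nat) (j : int) : nat :=
  if (j < 0)%R then 0%N else 'C(m, `|j|%N).

Definition q1 (R : fieldType) (h w : nat) (a c : 'rV['F_3]_h) (i : nat) : R :=
  @uprob R h w (fun e => hwt (eV a c e) == i).

Definition q2 (R : fieldType) (h w : nat) (a c : 'rV['F_3]_h) (s t : nat) : R :=
  @ucprob R h w (fun e => m1 e == s) (fun e => hwt (eV a c e) == t).

From HB Require Import structures.
From mathcomp Require Import all_boot all_order all_algebra.
From mathcomp Require Import zify ring.
Import Order.TTheory GRing.Theory Num.Theory.
Local Open Scope ring_scope.

(* Pair coordinate j of e with coordinate j + n/2.  As a_j c_j <> 0, the map
   (x1, x2) |-> -c_j x1 + a_j x2 is onto F_3 with a line as kernel, so the nine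
   pairs split into (0, 0), four pairs of weight 1 (all off the kernel), two
   pairs of weight 2 off the kernel and two of weight 2 in it.  Hence e is
   described by its profile: the support A of e_V, the set P <= A of weight-1
   pairs and the set K, disjoint from A, of weight-2 pairs in the kernel, plus
   one of 4^|P| 2^|A\P| 2^|K| choices of pair values.  When |e_V| = i and
   m_1(e) = s, the weight equation s + 2(i - s) + 2|K| = w forces
   |K| = (w + s)/2 - i, which gives C(n/2, i) C(i, s) C(n/2 - i, (w + s)/2 - i)
   2^((w + 3s)/2) vectors; dividing by the C(n, w) 2^w vectors of weight w yields
   both formulas. *)

Lemma sum_mem_card (T : finType) (A : {set T}) : (\sum_x (x \in A : nat))%N = #|A|.
Proof. by rewrite -sum1_card [RHS]big_mkcond. Qed.

Lemma card_set_partition {X U : finType} (phi : X -> U) (Q : pred U) :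
  #|[set x | Q (phi x)]| = (\sum_(u | Q u) #|[set x | phi x == u]|)%N.
Proof.
rewrite -sum1dep_card (partition_big phi Q) //=.
apply: eq_bigr => u Qu; rewrite -sum1dep_card; apply: eq_bigl => x.
by case: eqP => [->|]; rewrite ?Qu ?andbF.
Qed.

Lemma card_partition_nat {T : finType} (A : {set T}) (g : T -> nat) n :
  {in A, forall x, g x < n}%N ->
  #|A| = (\sum_(0 <= p < n) #|[set x in A | g x == p]|)%N.
Proof.
move=> lt_gn; rewrite -sum1_card; symmetry.
transitivity (\sum_(0 <= p < n) \sum_(x in A) (g x == p : nat))%N.
  apply: eq_bigr => p _; rewrite -sum_mem_card [RHS]big_mkcond.
  by apply: eq_bigr => x _; rewrite !inE; case: (x \in A).
rewrite exchange_big; apply: eq_bigr => x Ax.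
rewrite (eq_bigr (fun p => if p == g x then 1 else 0)%N) => [|p _]; last first.
  by rewrite eq_sym; case: eqP.
by rewrite -big_mkcond big_nat1_eq lt_gn.
Qed.

Lemma card_ffun_forall {I Y : finType} (F : I -> pred Y) :
  #|[set f : {ffun I -> Y} | [forall j, F j (f j)]]| = (\prod_j #|F j|)%N.
Proof.
transitivity #|(family F : simpl_pred {ffun I -> Y})|.
  by apply: eq_card => f; rewrite inE; apply/forallP/familyP.
by rewrite card_family foldrE big_map big_enum.
Qed.

Lemma card_rV_forall {Y : finType} {m} (F : 'I_m -> pred Y) :
  #|[set x : 'rV[Y]_m | [forall j, F j (x 0 j)]]| = (\prod_j #|F j|)%N.
Proof.
pose row_of (f : {ffun 'I_m -> Y}) : 'rV[Y]_m := \row_j f j.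
pose ffun_of (x : 'rV[Y]_m) := [ffun j => x 0 j].
have row_ofK : cancel row_of ffun_of by move=> f; apply/ffunP => j; rewrite ffunE mxE.
have ffun_ofK : cancel ffun_of row_of by move=> x; apply/rowP => j; rewrite mxE ffunE.
rewrite -card_ffun_forall -(card_imset _ (can_inj row_ofK)).
rewrite (can2_imset_pre _ row_ofK ffun_ofK).
by apply: eq_card => x; rewrite !inE; apply: eq_forallb => j; rewrite ffunE.
Qed.

Lemma F3_neq0 (x : 'F_3) : x != 0 -> x = 1 \/ x = -1.
Proof. by case: x => -[|[|[|m]]] Hm // _; [left | right]; apply: val_inj. Qed.

Lemma card_F3_neq0 (b : bool) : #|[pred x : 'F_3 | (x != 0) == b]| = (2 ^ b)%N.
Proof.
have -> : #|[pred x : 'F_3 | (x != 0) == b]| = (\sum_(x : 'F_3) ((x != 0%R) == b))%N.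
  by rewrite -sum1_card big_mkcond.
by rewrite !big_ord_recl big_ord0; case: b; vm_compute.
Qed.

Lemma card_F3xF3 (A : pred ('F_3 * 'F_3)) :
  #|A| = (\sum_(x1 : 'F_3) \sum_(x2 : 'F_3) A (x1, x2))%N.
Proof. by rewrite pair_big -sum1_card big_mkcond; apply: eq_bigr => -[]. Qed.

Lemma card_hwt m w : #|[set x : 'rV['F_3]_m | hwt x == w]| = ('C(m, w) * 2 ^ w)%N.
Proof.
rewrite (card_set_partition (fun x : 'rV['F_3]_m => [set j | x 0 j != 0])
                            (fun A => #|A| == w)).
under eq_bigr => A /eqP cardA.
  have -> : [set x : 'rV['F_3]_m | [set j | x 0 j != 0] == A] =
            [set x : 'rV['F_3]_m | [forall j, (x 0 j != 0) == (j \in A)]].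
    apply/setP => x; rewrite !inE; apply/eqP/forallP => [<- j | eqA].
      by rewrite inE.
    by apply/setP => j; rewrite inE (eqP (eqA j)).
  rewrite (card_rV_forall (fun j y => (y != 0) == (j \in A))).
  under eq_bigr do rewrite card_F3_neq0.
  rewrite -expn_sum sum_mem_card cardA.
  over.
by rewrite sum_nat_cond_const card_draws card_ord mulnC.
Qed.

Definition pairwt (x : 'F_3 * 'F_3) : nat := ((x.1 != 0%R) + (x.2 != 0%R))%N.

Definition pair_eV (al ga : 'F_3) (x : 'F_3 * 'F_3) : 'F_3 := - ga * x.1 + al * x.2.

Definition pair_class (al ga : 'F_3) (x : 'F_3 * 'F_3) : bool * bool * bool :=
  (pair_eV al ga x != 0, pairwt x == 1%N, (pairwt x == 2) && (pair_eV al ga x == 0)).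

Lemma pair_eV_neq0 al ga x :
  al != 0 -> ga != 0 -> pairwt x == 1%N -> pair_eV al ga x != 0.
Proof.
case: x => x1 x2 al0 ga0; rewrite /pairwt /pair_eV /=.
have [->|x10] := eqVneq x1 0; have [->|x20] := eqVneq x2 0 => //= _.
- by rewrite mulr0 add0r mulf_neq0.
- by rewrite mulr0 addr0 mulNr oppr_eq0 mulf_neq0.
Qed.

Lemma pairwtE al ga x : pairwt x =
  ((pairwt x == 1%N) + 2 * ((pairwt x != 1%N) && (pair_eV al ga x != 0%R))
   + 2 * ((pairwt x == 2) && (pair_eV al ga x == 0%R)))%N.
Proof.
case: x => x1 x2; rewrite /pairwt /pair_eV /=.
have [->|x10] := eqVneq x1 0; have [->|x20] := eqVneq x2 0 => //=.
- by rewrite !mulr0 addr0 eqxx.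
- by case: eqP.
Qed.

Lemma card_pair_class {al ga bS bP bK} :
  al != 0 -> ga != 0 -> bP ==> bS -> ~~ (bK && bS) ->
  #|[pred x | pair_class al ga x == (bS, bP, bK)]| =
  (4 ^ bP * 2 ^ (~~ bP && bS) * 2 ^ bK)%N.
Proof.
move=> /F3_neq0[]-> /F3_neq0[]->; case: bS; case: bP; case: bK => // _ _;
  by rewrite card_F3xF3 !big_ord_recl !big_ord0; vm_compute.
Qed.

Lemma binz_subn n m i :
  binz n (m%:Z - i%:Z) = if (i <= m)%N then 'C(n, m - i) else 0%N.
Proof.
rewrite /binz; case: leqP => [le_im | lt_mi].
  by rewrite subzn // ltNge /= ler0z absz_nat.
by rewrite ifT // subr_lt0 ltz_nat.
Qed.

Definition nprofiles (n w i s : nat) : nat :=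
  ('C(n, i) *
   (if ~~ odd (w + s) then 'C(i, s) * binz (n - i) ((w + s)./2%:Z - i%:Z) else 0))%N.

Section Profiles.
Context {T : finType}.
Implicit Types (A P K : {set T}) (u : {set T} * {set T} * {set T}).

Definition admissible u : bool :=
  let: (A, P, K) := u in (P \subset A) && [disjoint K & A].

Definition profile_wt u : nat :=
  let: (A, P, K) := u in (#|P| + 2 * #|A :\: P| + 2 * #|K|)%N.

Definition profile_mass u : nat :=
  let: (A, P, K) := u in (4 ^ #|P| * 2 ^ #|A :\: P| * 2 ^ #|K|)%N.

Lemma card_setD_admissible {A P K} :
  admissible (A, P, K) -> #|A :\: P| = (#|A| - #|P|)%N.
Proof. by case/andP=> sPA _; rewrite cardsD (setIidPr sPA). Qed.

Lemma profile_wt_admissible {A P K} : admissible (A, P, K) ->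
  (profile_wt (A, P, K) + #|P| = 2 * (#|A| + #|K|))%N.
Proof.
move=> adm; have := subset_leq_card (proj1 (andP adm)).
rewrite /profile_wt (card_setD_admissible adm); lia.
Qed.

Lemma profile_mass_admissible {A P K} : admissible (A, P, K) ->
  profile_mass (A, P, K) = (2 ^ (#|P| + #|A| + #|K|))%N.
Proof.
move=> adm; have := subset_leq_card (proj1 (andP adm)).
rewrite /profile_mass (card_setD_admissible adm) -[4%N]/(2 ^ 2)%N -expnM -!expnD.
by move=> le_PA; congr (2 ^ _)%N; lia.
Qed.

Lemma card_admissible i s k :
  #|[set u | [&& admissible u, #|u.1.1| == i, #|u.1.2| == s & #|u.2| == k]]| =
  ('C(#|T|, i) * 'C(i, s) * 'C(#|T| - i, k))%N.
Proof.
rewrite -sum1dep_card.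
transitivity (\sum_(A : {set T} | #|A| == i)
                \sum_(P : {set T} | (P \subset A) && (#|P| == s))
                \sum_(K : {set T} | [disjoint K & A] && (#|K| == k)) 1)%N.
  rewrite pair_big_dep pair_big_dep; apply: eq_bigl => -[[A P] K] /=.
  by case: (P \subset A); case: [disjoint K & A]; case: (#|A| == i); rewrite /= ?andbF.
have card_disjoint A :
    #|[set K : {set T} | [disjoint K & A] && (#|K| == k)]| = 'C(#|T| - #|A|, k).
  have -> : (#|T| - #|A|)%N = #|~: A| by rewrite (cardsCs (~: A)) setCK.
  by rewrite -cards_draws; apply: eq_card => K; rewrite !inE disjoints_subset.
have card_subsets A :
    #|[set P : {set T} | (P \subset A) && (#|P| == s)]| = 'C(#|A|, s).
  by rewrite -cards_draws; apply: eq_card => P; rewrite !inE.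
under eq_bigr => A /eqP cardA.
  under eq_bigr do rewrite sum1dep_card card_disjoint cardA.
  rewrite sum_nat_cond_const card_subsets cardA.
  over.
by rewrite sum_nat_cond_const card_draws mulnA.
Qed.

Lemma sum_profile_mass w i s :
  (\sum_(u | [&& admissible u, profile_wt u == w, #|u.1.2| == s & #|u.1.1| == i])
     profile_mass u)%N = (nprofiles #|T| w i s * 2 ^ (s + (w + s)./2))%N.
Proof.
set m := (w + s)./2; have ws_m := odd_double_half (w + s); rewrite -/m -muln2 in ws_m.
have wt_eq u : admissible u -> #|u.1.2| = s -> #|u.1.1| = i ->
    (profile_wt u == w) = ~~ odd (w + s) && (i + #|u.2| == m)%N.
  case: u => [[A P] K] adm /= cP cA; have := profile_wt_admissible adm.
  rewrite cP cA; case: odd ws_m => /= ws_m wtE.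
    by apply/negbTE/eqP; lia.
  by apply/eqP/eqP; lia.
rewrite (eq_bigr (fun _ => 2 ^ (s + m))%N); last first.
  move=> [[A P] K] /and4P[adm /eqP wtw /eqP cP /eqP cA].
  rewrite profile_mass_admissible //; have := profile_wt_admissible adm.
  by rewrite wtw cP /= cA => wtE; congr (2 ^ _)%N; lia.
rewrite sum_nat_cond_const; congr (_ * _)%N.
transitivity #|[set u | [&& admissible u, #|u.1.1| == i, #|u.1.2| == s &
                           ~~ odd (w + s) && (i <= m)%N && (#|u.2| == m - i)%N]]|.
  apply: eq_card => u; rewrite !inE; case adm: (admissible u) => //=.
  have [cP|] := eqVneq #|u.1.2| s; have [cA|] := eqVneq #|u.1.1| i; rewrite ?andbF //=.
  rewrite wt_eq //; case: (odd _) => //=.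
  by rewrite andbT; apply/eqP/andP => [|[]]; lia.
rewrite /nprofiles binz_subn -/m; case: (odd _) => /=.
  by rewrite !muln0 (@eq_card0 _ [set _ | _]) // => u; rewrite !inE !andbF.
case: leqP => [le_im | lt_mi]; last first.
  by rewrite !muln0 (@eq_card0 _ [set _ | _]) // => u; rewrite !inE !andbF.
by rewrite mulnA -card_admissible.
Qed.

End Profiles.

Section ErrorVectors.
Context {h : nat} {a c : 'rV['F_3]_h}.
Hypothesis ac_neq0 : forall j, a 0 j * c 0 j != 0.
Implicit Type f : {ffun 'I_h -> 'F_3 * 'F_3}.

Definition pairv (e : 'rV['F_3]_(h + h)) : {ffun 'I_h -> 'F_3 * 'F_3} :=
  [ffun j => (e 0 (lshift h j), e 0 (rshift h j))].

Definition unpairv f : 'rV['F_3]_(h + h) := row_mx (\row_j (f j).1) (\row_j (f j).2).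

Lemma pairvK : cancel pairv unpairv.
Proof.
move=> e; rewrite /unpairv -[RHS]hsubmxK; congr row_mx; apply/rowP => j;
  by rewrite !mxE ffunE.
Qed.

Lemma unpairvK : cancel unpairv pairv.
Proof.
by move=> f; apply/ffunP => j; rewrite ffunE row_mxEl row_mxEr !mxE; case: (f j).
Qed.

Lemma card_preim_pairv (Q : pred {ffun 'I_h -> 'F_3 * 'F_3}) :
  #|[set e | Q (pairv e)]| = #|[set f | Q f]|.
Proof.
rewrite -(card_imset _ (can_inj unpairvK)) (can2_imset_pre _ unpairvK pairvK).
by apply: eq_card => e; rewrite !inE.
Qed.

Local Notation class f j := (pair_class (a 0 j) (c 0 j) (f j)).

Definition suppV f := [set j | (class f j).1.1].
Definition supp1 f := [set j | (class f j).1.2].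
Definition kerV2 f := [set j | (class f j).2].
Definition profile f := (suppV f, supp1 f, kerV2 f).

Lemma a_neq0 j : a 0 j != 0.
Proof. by have := ac_neq0 j; rewrite mulf_eq0 negb_or => /andP[]. Qed.

Lemma c_neq0 j : c 0 j != 0.
Proof. by have := ac_neq0 j; rewrite mulf_eq0 negb_or => /andP[]. Qed.

Lemma profile_admissible f : admissible (profile f).
Proof.
apply/andP; split; apply/subsetP || rewrite -setI_eq0; last first.
  by apply/eqP/setP => j; rewrite !inE /=; case: (_ == 0); rewrite ?andbF.
by move=> j; rewrite !inE; apply: pair_eV_neq0; [apply: a_neq0 | apply: c_neq0].
Qed.

Lemma sum_pairwt_profile f : (\sum_j pairwt (f j))%N = profile_wt (profile f).
Proof.
rewrite /profile_wt /= -!sum_mem_card !big_distrr -!big_split /=.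
by apply: eq_bigr => j _; rewrite (pairwtE (a 0 j) (c 0 j)) !inE.
Qed.

Lemma card_profile_fiber u :
  admissible u -> #|[set f | profile f == u]| = profile_mass u.
Proof.
case: u => [[A P] K] /andP[sPA dKA].
have -> : [set f | profile f == (A, P, K)] =
          [set f : {ffun 'I_h -> 'F_3 * 'F_3} |
            [forall j, class f j == (j \in A, j \in P, j \in K)]].
  apply/setP => f; rewrite !inE; apply/eqP/forallP => [[<- <- <-] j | eq_class].
    by rewrite !inE; case: (class f j) => -[].
  by congr (_, _, _); apply/setP => j; have /eqP := eq_class j; rewrite !inE => ->.
have PA j : (j \in P) ==> (j \in A) by apply/implyP => /(subsetP sPA).
have KA j : ~~ ((j \in K) && (j \in A)).
  by apply/negP => /andP[jK]; rewrite (disjointFr dKA jK).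
rewrite (card_ffun_forall (fun j x =>
  pair_class (a 0 j) (c 0 j) x == (j \in A, j \in P, j \in K))).
under eq_bigr => j _ do rewrite (card_pair_class (a_neq0 j) (c_neq0 j) (PA j) (KA j)).
rewrite !big_split /= -!expn_sum -!sum_mem_card.
by congr (_ * 2 ^ _ * _)%N; apply: eq_bigr => j _; rewrite inE.
Qed.

Lemma card_ffun_profile w i s :
  #|[set f : {ffun 'I_h -> 'F_3 * 'F_3} |
      [&& (\sum_j pairwt (f j) == w)%N, #|supp1 f| == s & #|suppV f| == i]]| =
  (nprofiles h w i s * 2 ^ (s + (w + s)./2))%N.
Proof.
pose Q (u : {set 'I_h} * {set 'I_h} * {set 'I_h}) :=
  [&& admissible u, profile_wt u == w, #|u.1.2| == s & #|u.1.1| == i].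
transitivity #|[set f | Q (profile f)]|.
  by apply: eq_card => f; rewrite !inE /Q profile_admissible sum_pairwt_profile.
rewrite card_set_partition.
under eq_bigr => u /andP[adm _] do rewrite card_profile_fiber //.
by rewrite sum_profile_mass card_ord.
Qed.

Lemma hwt_pairv e : hwt e = (\sum_j pairwt (pairv e j))%N.
Proof.
rewrite /hwt -sum_mem_card big_split_ord /= -big_split.
by apply: eq_bigr => j _; rewrite !inE ffunE.
Qed.

Lemma m1_pairv e : m1 e = #|supp1 (pairv e)|.
Proof. by apply: eq_card => j; rewrite !inE ffunE. Qed.

Lemma hwt_eV_pairv e : hwt (eV a c e) = #|suppV (pairv e)|.
Proof. by apply: eq_card => j; rewrite !inE !mxE ffunE /= /pair_eV mulNr. Qed.

Lemma m1_le_hwt_eV e : (m1 e <= hwt (eV a c e))%N.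
Proof.
rewrite m1_pairv hwt_eV_pairv subset_leq_card //.
by case/andP: (profile_admissible (pairv e)).
Qed.

Lemma card_wt_m1_eV w i s :
  #|[set e in wsupport h w | (m1 e == s) && (hwt (eV a c e) == i)]| =
  (nprofiles h w i s * 2 ^ (s + (w + s)./2))%N.
Proof.
rewrite -card_ffun_profile -(card_preim_pairv (fun f =>
  [&& (\sum_j pairwt (f j) == w)%N, #|supp1 f| == s & #|suppV f| == i])).
by apply: eq_card => e; rewrite !inE hwt_pairv m1_pairv hwt_eV_pairv.
Qed.

Lemma card_wt_eV w i :
  #|[set e in wsupport h w | hwt (eV a c e) == i]| =
  (\sum_(0 <= p < i.+1)
     #|[set e in wsupport h w | (m1 e == p) && (hwt (eV a c e) == i)]|)%N.
Proof.
rewrite (card_partition_nat _ (@m1 h) i.+1) => [|e]; last first.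
  by rewrite !inE => /andP[_ /eqP <-]; rewrite ltnS m1_le_hwt_eV.
apply: eq_bigr => p _; apply: eq_card => e.
by rewrite !inE -andbA (andbC (hwt _ == i)).
Qed.

End ErrorVectors.

Lemma natr_exp2 (R : rcfType) n : ((2 ^ n)%:R : R) = Num.sqrt 2 ^+ (2 * n).
Proof. by rewrite natrX exprM sqr_sqrtr ?ler0n. Qed.

Lemma natr_nprofiles (R : rcfType) n w i s :
  ((nprofiles n w i s * 2 ^ (s + (w + s)./2))%:R : R) =
  'C(n, i)%:R * Num.sqrt 2 ^+ w *
  (if ~~ odd (w + s) then
     ('C(i, s) * binz (n - i) ((w + s)./2%:Z - i%:Z))%:R * Num.sqrt 2 ^+ (3 * s)
   else 0).
Proof.
rewrite /nprofiles; case: ifP => [even_ws | _]; last by rewrite muln0 mul0n !mulr0.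
have ws_m := odd_double_half (w + s); rewrite (negbTE even_ws) add0n -muln2 in ws_m.
rewrite !natrM natr_exp2.
have -> : (2 * (s + (w + s)./2) = w + 3 * s)%N by lia.
by rewrite exprD; ring.
Qed.

Lemma ratio_cancel (R : fieldType) (k d x y : R) : k != 0 -> d != 0 ->
  (k * x / d) / (k * y / d) = x / y.
Proof.
move=> k0 d0; rewrite !invfM invrK.
transitivity (x / y * (k / k) * (d / d)); first by ring.
by rewrite !mulfV // !mulr1.
Qed.

Theorem proposition5 (R : rcfType) (h w i t s : nat)
  (a b c d : 'rV['F_3]_h) :
  (w <= h + h)%N -> (i <= h)%N -> (t <= h)%N -> (s <= t)%N ->
  (forall j, a 0 j * d 0 j - b 0 j * c 0 j = 1) ->
  (forall j, a 0 j * c 0 j != 0) ->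
  @q1 R h w a c i =
    ('C(h, i)%:R / ('C(h + h, w)%:R * Num.sqrt 2 ^+ w)) *
    \sum_(0 <= p < i.+1 | ~~ odd (w + p))
       ('C(i, p) * binz (h - i) ((w + p)./2%:Z - i%:Z))%:R * Num.sqrt 2 ^+ (3 * p)
  /\
  @q2 R h w a c s t =
    (if ~~ odd (w + s) then
       (('C(t, s) * binz (h - t) ((w + s)./2%:Z - t%:Z))%:R * Num.sqrt 2 ^+ (3 * s)) /
       (\sum_(0 <= p < t.+1 | ~~ odd (w + p))
          ('C(t, p) * binz (h - t) ((w + p)./2%:Z - t%:Z))%:R * Num.sqrt 2 ^+ (3 * p))
     else 0).
Proof.
move=> le_w_hh _ le_th _ _ ac_neq0.
set r := Num.sqrt (2 : R).
have rw_neq0 : r ^+ w != 0 by rewrite expf_neq0 // sqrtr_eq0 -ltNge ltr0n.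
have Cw_neq0 : 'C(h + h, w)%:R != 0 :> R by rewrite pnatr_eq0 -lt0n bin_gt0.
have card_supp : #|wsupport h w|%:R = 'C(h + h, w)%:R * r ^+ w * r ^+ w :> R.
  by rewrite card_hwt natrM natr_exp2 mul2n -addnn exprD mulrA.
split.
  rewrite /q1 /uprob (card_wt_eV ac_neq0) natr_sum card_supp.
  under eq_bigr do rewrite (card_wt_m1_eV ac_neq0) natr_nprofiles.
  by rewrite -mulr_sumr -big_mkcond /= -/r; field; rewrite rw_neq0 Cw_neq0.
rewrite /q2 /ucprob /uprob (card_wt_m1_eV ac_neq0) (card_wt_eV ac_neq0) natr_sum.
under eq_bigr do rewrite (card_wt_m1_eV ac_neq0) natr_nprofiles.
rewrite natr_nprofiles -mulr_sumr -big_mkcond /= -/r.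
case: ifP => _; last by rewrite mulr0 !mul0r.
by rewrite ratio_cancel ?card_supp ?mulf_neq0 // pnatr_eq0 -lt0n bin_gt0.
Qed.
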